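(* Let $Z$ be a compact, arcwise connected, approximately self-similar metric space with a $\kappa$-approximation $\{G_k\}_{k\in\mathbb N}$. For $d_0>0$ let $\mathcal F_0$ be the family of curves $\gamma\subset Z$ with $\mathrm{diam}(\gamma)\ge d_0$. Then, for $d_0$ sufficiently small (compared to $\mathrm{diam}Z$ and to the self-similarity constant $L_0$), for every $p\ge1$ there is a constant $C>0$ such that, writing $M_k=\mathrm{Mod}_p(\mathcal F_0,G_k)$, one has $M_{k+\ell}\le C\,M_k\,M_\ell$ for all $k,\ell\in\mathbb N$. Moreover, when $p$ ranges over a compact subset of $[1,\infty)$, $C$ may be chosen independent of $p$.
   Context: A compact metric space $(Z,d)$ is approximately self-similar if there is $L_0\ge1$ such that for every ball $B(z,r)\subset Z$ with $0<r\le\mathrm{diam}Z$ there is an open subset $U\subset Z$ which is $L_0$-bi-Lipschitz homeomorphic to the rescaled ball $(B(z,r),\frac1r d)$. Combinatorial modulus: for a compact metric space $Z$, $\kappa\ge1$, $k\in\mathbb N$, a finite graph $G_k$ is a $\kappa$-approximation of $Z$ on scale $k$ if it is the incidence graph of a finite covering of $Z$ (vertices identified with covering sets; distinct vertices adjacent iff they intersect) such that each vertex $v$ has $z_v$ with $B(z_v,\kappa^{-1}2^{-k})\subset v\subset B(z_v,\kappa2^{-k})$ and the balls $B(z_v,\kappa^{-1}2^{-k})$ are pairwise disjoint for distinct vertices; $\{G_k\}$ is a $\kappa$-approximation if each $G_k$ is one on scale $k$. For $\rho:G_k^0\to\mathbb R_+$, $L_\rho(\gamma)=\sum_{v\cap\gamma\ne\emptyset}\rho(v)$,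 $M_p(\rho)=\sum_v\rho(v)^p$; $\mathrm{Mod}_p(\mathcal F,G_k)=\inf M_p(\rho)$ over $\rho$ with $L_\rho(\gamma)\ge1$ for all $\gamma\in\mathcal F$. *)

From Stdlib Require Import Reals Lra ClassicalEpsilon.
Open Scope R_scope.
Set Implicit Arguments.
Unset Strict Implicit.

Section Metric.
Variable Z : Type.
Variable d : Z -> Z -> R.

Definition IsMetric : Prop :=
  (forall x y, 0 <= d x y) /\ (forall x y, d x y = 0 <-> x = y) /\
  (forall x y, d x y = d y x) /\ (forall x y z, d x z <= d x y + d y z).

Definition ball (z : Z) (r : R) : Z -> Prop := fun y => d z y < r.

Definition IsOpen (U : Z -> Prop) : Prop :=
  forall y, U y -> exists e, 0 < e /\ forall w, ball y e w -> U w.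

(* compactness = sequential compactness (equivalent for metric spaces) *)
Definition CompactSpace : Prop :=
  forall u : nat -> Z, exists (phi : nat -> nat) (z : Z),
    (forall n m, (n < m)%nat -> (phi n < phi m)%nat) /\
    forall e, 0 < e -> exists N, forall n, (N <= n)%nat -> d (u (phi n)) z < e.

(* continuity of a map [0,1] -> Z (the map is given on R, only [0,1] matters) *)
Definition ContOn01 (g : R -> Z) : Prop :=
  forall t, 0 <= t <= 1 -> forall e, 0 < e -> exists de, 0 < de /\
    forall s, 0 <= s <= 1 -> Rabs (s - t) < de -> d (g s) (g t) < e.

Definition ArcConnected : Prop :=
  forall x y, x <> y -> exists g : R -> Z, ContOn01 g /\
    (forall s t, 0 <= s <= 1 -> 0 <= t <= 1 -> g s = g t -> s = t) /\
    g 0 = x /\ g 1 = y.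

Definition IsDiamZ (D : R) : Prop := is_lub (fun t => exists x y, t = d x y) D.

Definition ApproxSelfSimilar : Prop :=
  exists L0, 1 <= L0 /\
    forall (D : R) (z : Z) (r : R), IsDiamZ D -> 0 < r <= D ->
      exists (U : Z -> Prop) (f : Z -> Z),
        IsOpen U /\
        (forall x, ball z r x -> U (f x)) /\
        (forall y, U y -> exists x, ball z r x /\ f x = y) /\
        (forall x y, ball z r x -> ball z r y ->
           (1 / L0) * (d x y / r) <= d (f x) (f y) /\
           d (f x) (f y) <= L0 * (d x y / r)).

(* a finite covering with centres; vertices are the indices i < a_N *)
Record Approx : Type := mkApprox {
  a_N : nat;
  a_V : nat -> Z -> Prop;
  a_c : nat -> Z }.

Definition IsKappaApproxScale (kappa : R) (k : nat) (A : Approx) : Prop :=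
  (forall z, exists i, (i < a_N A)%nat /\ a_V A i z) /\
  (forall i, (i < a_N A)%nat ->
     (forall y, ball (a_c A i) (/ kappa * (/ 2) ^ k) y -> a_V A i y) /\
     (forall y, a_V A i y -> ball (a_c A i) (kappa * (/ 2) ^ k) y)) /\
  (forall i j y, (i < a_N A)%nat -> (j < a_N A)%nat -> i <> j ->
     ball (a_c A i) (/ kappa * (/ 2) ^ k) y ->
     ball (a_c A j) (/ kappa * (/ 2) ^ k) y -> False).

Definition IsKappaApprox (kappa : R) (G : nat -> Approx) : Prop :=
  forall k, IsKappaApproxScale kappa k (G k).

(* a curve is (the image of) a continuous map g : [0,1] -> Z *)
Definition Curve : Type := R -> Z.

Definition curve_meets (g : Curve) (S : Z -> Prop) : Prop :=
  exists t, 0 <= t <= 1 /\ S (g t).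

Definition F0 (d0 : R) (g : Curve) : Prop :=
  ContOn01 g /\
  exists D, is_lub (fun u => exists s t, 0 <= s <= 1 /\ 0 <= t <= 1 /\ u = d (g s) (g t)) D
            /\ d0 <= D.

End Metric.

Fixpoint rsum (n : nat) (f : nat -> R) : R :=
  match n with O => 0 | S m => rsum m f + f m end.

(* x^p for x >= 0, p > 0 (with 0^p = 0) *)
Definition rpow (x p : R) : R :=
  if Rle_dec x 0 then 0 else Rpower x p.

Definition is_glb (E : R -> Prop) (m : R) : Prop :=
  (forall x, E x -> m <= x) /\ (forall b, (forall x, E x -> b <= x) -> b <= m).

Section Modulus.
Variable Z : Type.

Definition Lrho (A : Approx Z) (rho : nat -> R) (g : Curve Z) : R :=
  rsum (a_N A) (fun i =>
    if excluded_middle_informative (curve_meets g (a_V A i)) then rho i else 0).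

Definition Mp (A : Approx Z) (p : R) (rho : nat -> R) : R :=
  rsum (a_N A) (fun i => rpow (rho i) p).

Definition ModValues (p : R) (F : Curve Z -> Prop) (A : Approx Z) (m : R) : Prop :=
  exists rho : nat -> R,
    (forall i, (i < a_N A)%nat -> 0 <= rho i) /\
    (forall g, F g -> 1 <= Lrho A rho g) /\
    m = Mp A p rho.

Definition IsMod (p : R) (F : Curve Z -> Prop) (A : Approx Z) (m : R) : Prop :=
  is_glb (ModValues p F A) m.
End Modulus.

(* Admissible densities [a] on [G k] and [b] on [G l] are combined into the density
   [w |-> sum of a v * b u over the pairs (v, u) related to w] on [G (k + l)].  It is
   admissible: a curve of [F_0] meeting the vertex [v] crosses the ball [B(v, 4 kappa 2^-k)],
   and the approximately self-similar rescaling of that ball maps the crossing arc to a curve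
   of diameter at least [1 / (4 L0) > d0], hence again in [F_0] and charged by [b].  Its
   [p]-mass is at most [P^p * P * M_p(a) * M_p(b)], where [P] bounds how many pairs a vertex
   is related to and conversely; such a packing bound, uniform over all scales, follows from
   compactness and the bi-Lipschitz rescalings.  For the finitely many scales [k] at which
   these balls are not small, [M_k] is bounded below and [a = 1] on a single vertex gives
   [M_(k+l) <= C M_l] instead.  The constants depend on [p] only through [P^p]. *)

From Stdlib Require Import Reals Lra Lia List Classical ClassicalEpsilon ZArith.
Open Scope R_scope.

(* [Lrho A rho g] is, by conversion, [rsum (a_N A) (fun i => rwhen (curve_meets g (a_V A i)) (rho i))]. *)
Definition rwhen (P : Prop) (x : R) : R :=
  if excluded_middle_informative P then x else 0.

Lemma rwhen_true (P : Prop) x : P -> rwhen P x = x.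
Proof. intro H; unfold rwhen; destruct excluded_middle_informative; tauto. Qed.

Lemma rwhen_false (P : Prop) x : ~ P -> rwhen P x = 0.
Proof. intro H; unfold rwhen; destruct excluded_middle_informative; tauto. Qed.

Lemma rwhen_nonneg (P : Prop) x : 0 <= x -> 0 <= rwhen P x.
Proof. unfold rwhen; destruct excluded_middle_informative; lra. Qed.

Lemma rwhen_scale (P : Prop) x : rwhen P x = x * rwhen P 1.
Proof. unfold rwhen; destruct excluded_middle_informative; lra. Qed.

Lemma rsum_ext n f g : (forall i, (i < n)%nat -> f i = g i) -> rsum n f = rsum n g.
Proof.
  induction n as [|n IH]; simpl; intros H; auto.
  rewrite IH by (intros; apply H; lia). rewrite (H n) by lia; auto.
Qed.

Lemma rsum_le n f g : (forall i, (i < n)%nat -> f i <= g i) -> rsum n f <= rsum n g.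
Proof.
  induction n as [|n IH]; simpl; intros H; [lra|].
  assert (rsum n f <= rsum n g) by (apply IH; intros; apply H; lia).
  assert (f n <= g n) by (apply H; lia). lra.
Qed.

Lemma rsum_zero n : rsum n (fun _ => 0) = 0.
Proof. induction n as [|n IH]; simpl; auto. rewrite IH; lra. Qed.

Lemma rsum_nonneg n f : (forall i, (i < n)%nat -> 0 <= f i) -> 0 <= rsum n f.
Proof. intro H. rewrite <- (rsum_zero n). apply rsum_le; auto. Qed.

Lemma rsum_plus n f g : rsum n (fun i => f i + g i) = rsum n f + rsum n g.
Proof. induction n as [|n IH]; simpl; [lra|]. rewrite IH; lra. Qed.

Lemma rsum_scal n c f : rsum n (fun i => c * f i) = c * rsum n f.
Proof. induction n as [|n IH]; simpl; [lra|]. rewrite IH; lra. Qed.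

Lemma rsum_swap n m f :
  rsum n (fun i => rsum m (fun j => f i j)) = rsum m (fun j => rsum n (fun i => f i j)).
Proof.
  induction n as [|n IH]; simpl; [now rewrite rsum_zero|].
  rewrite IH, <- rsum_plus; auto.
Qed.

Lemma rsum_term_le n f i :
  (forall j, (j < n)%nat -> 0 <= f j) -> (i < n)%nat -> f i <= rsum n f.
Proof.
  induction n as [|n IH]; intros H Hi; [lia|]. simpl.
  destruct (Nat.eq_dec i n) as [->|Hne].
  - assert (0 <= rsum n f) by (apply rsum_nonneg; intros; apply H; lia). lra.
  - assert (f i <= rsum n f) by (apply IH; [intros; apply H|]; lia).
    assert (0 <= f n) by (apply H; lia). lra.
Qed.

Lemma rsum_lt_const n f c :
  (0 < n)%nat -> (forall i, (i < n)%nat -> f i < c) -> rsum n f < INR n * c.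
Proof.
  induction n as [|n IH]; intros Hn H; [lia|]. simpl rsum. rewrite S_INR.
  assert (f n < c) by (apply H; lia).
  destruct (Nat.eq_dec n 0) as [->|Hn0]; [simpl; lra|].
  assert (rsum n f < INR n * c) by (apply IH; [|intros; apply H]; lia). lra.
Qed.

Lemma rpow_nonneg x p : 0 <= rpow x p.
Proof. unfold rpow; destruct Rle_dec; [lra|]. left; apply exp_pos. Qed.

Lemma rpow_pos x p : 0 < x -> 0 < rpow x p.
Proof. intro; unfold rpow; destruct Rle_dec; [lra|]. apply exp_pos. Qed.

Lemma rpow_0 p : rpow 0 p = 0.
Proof. unfold rpow; destruct Rle_dec; lra. Qed.

Lemma rpow_1 p : rpow 1 p = 1.
Proof. unfold rpow; destruct Rle_dec; [lra|]. unfold Rpower; rewrite ln_1, Rmult_0_r; apply exp_0. Qed.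

Lemma rpow_mult x y p : 0 <= x -> 0 <= y -> rpow (x * y) p = rpow x p * rpow y p.
Proof.
  intros Hx Hy.
  destruct (Req_dec x 0) as [->|]; [rewrite Rmult_0_l, !rpow_0; lra|].
  destruct (Req_dec y 0) as [->|]; [rewrite Rmult_0_r, !rpow_0; lra|].
  assert (0 < x * y) by (apply Rmult_lt_0_compat; lra).
  unfold rpow; do 3 (destruct Rle_dec; [lra|]). rewrite Rpower_mult_distr; lra.
Qed.

Lemma rpow_le x y p : 0 <= p -> 0 <= x <= y -> rpow x p <= rpow y p.
Proof.
  intros Hp Hxy. destruct (Req_dec x 0) as [->|]; [rewrite rpow_0; apply rpow_nonneg|].
  unfold rpow; do 2 (destruct Rle_dec; [lra|]). apply Rle_Rpower_l; lra.
Qed.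

Lemma rpow_le_exponent x p q : 1 <= x -> p <= q -> rpow x p <= rpow x q.
Proof. intros; unfold rpow; destruct Rle_dec; [lra|]. apply Rle_Rpower; auto. Qed.

Lemma rpow_ge_exponent x p q : 0 <= x <= 1 -> p <= q -> rpow x q <= rpow x p.
Proof.
  intros Hx Hpq. destruct (Req_dec x 0) as [->|]; [rewrite !rpow_0; lra|].
  unfold rpow; destruct Rle_dec; [lra|]. unfold Rpower.
  assert (ln x <= 0).
  { destruct (Req_dec x 1) as [->|]; [rewrite ln_1; lra|].
    left; rewrite <- ln_1; apply ln_increasing; lra. }
  destruct (Req_dec (q * ln x) (p * ln x)) as [E|]; [rewrite E; lra|].
  left; apply exp_increasing; nra.
Qed.

Lemma rpow_Rmax a b p : 0 <= a -> 0 <= b -> rpow (Rmax a b) p <= rpow a p + rpow b p.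
Proof.
  intros. assert (0 <= rpow a p) by apply rpow_nonneg. assert (0 <= rpow b p) by apply rpow_nonneg.
  unfold Rmax; destruct Rle_dec; lra.
Qed.

Lemma exists_common_bound p n (S : nat -> R) (B : nat -> R -> Prop) :
  0 <= p -> (forall i m m', B i m -> m <= m' -> B i m') ->
  (forall i, (i < n)%nat -> exists m, 0 <= m /\ B i m /\ rpow m p <= S i) ->
  exists m, 0 <= m /\ (forall i, (i < n)%nat -> B i m) /\ rpow m p <= rsum n S.
Proof.
  intros Hp HB. induction n as [|n IH]; intro H.
  - exists 0. split; [lra|]. split; [intros; lia|]. simpl; rewrite rpow_0; lra.
  - destruct IH as [m [Hm [HBm Hsum]]]; [intros; apply H; lia|].
    destruct (H n) as [m' [Hm' [HBm' Hsum']]]; [lia|].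
    exists (Rmax m m'). split; [apply Rle_trans with m; [|apply Rmax_l]; lra|]. split.
    + intros i Hi. destruct (Nat.eq_dec i n) as [->|].
      * apply HB with m'; [auto|apply Rmax_r].
      * apply HB with m; [apply HBm; lia|apply Rmax_l].
    + simpl. eapply Rle_trans; [apply rpow_Rmax; auto|lra].
Qed.

Lemma exists_bound_rpow_le_rsum p n (f : nat -> R) (sel : nat -> Prop) :
  0 <= p -> (forall i, (i < n)%nat -> 0 <= f i) ->
  exists m, 0 <= m /\ (forall i, (i < n)%nat -> sel i -> f i <= m) /\
    rpow m p <= rsum n (fun i => rwhen (sel i) (rpow (f i) p)).
Proof.
  intros Hp Hf.
  destruct (exists_common_bound p n (fun i => rwhen (sel i) (rpow (f i) p))
              (fun i m => sel i -> f i <= m)) as [m [Hm [HB Hsum]]]; auto.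
  - intros i m m' H Hmm' Hs. specialize (H Hs). lra.
  - intros i Hi. exists (rwhen (sel i) (f i)). split; [apply rwhen_nonneg, Hf; auto|].
    unfold rwhen; destruct excluded_middle_informative; [split; [lra|lra]|].
    split; [tauto|rewrite rpow_0; lra].
  - exists m; auto.
Qed.

Lemma exists_bound_rpow_le_rsum2 p nv nu (f : nat -> nat -> R) (sel : nat -> nat -> Prop) :
  0 <= p -> (forall v u, (v < nv)%nat -> (u < nu)%nat -> 0 <= f v u) ->
  exists m, 0 <= m /\ (forall v u, (v < nv)%nat -> (u < nu)%nat -> sel v u -> f v u <= m) /\
    rpow m p <= rsum nv (fun v => rsum nu (fun u => rwhen (sel v u) (rpow (f v u) p))).
Proof.
  intros Hp Hf.
  destruct (exists_common_bound p nv (fun v => rsum nu (fun u => rwhen (sel v u) (rpow (f v u) p)))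
              (fun v m => forall u, (u < nu)%nat -> sel v u -> f v u <= m)) as [m [Hm [HB Hsum]]]; auto.
  - intros v m m' H Hmm' u Hu Hs. specialize (H u Hu Hs). lra.
  - intros v Hv. apply exists_bound_rpow_le_rsum; auto.
  - exists m. split; [auto|split; [intros; apply HB|]]; auto.
Qed.

Lemma exists_pos_lower_bound n (f : nat -> R) :
  (forall k, (k < n)%nat -> 0 < f k) -> exists m, 0 < m /\ forall k, (k < n)%nat -> m <= f k.
Proof.
  induction n as [|n IH]; intro Hf; [exists 1; split; [lra|intros; lia]|].
  destruct IH as [m [Hm Hle]]; [intros; apply Hf; lia|].
  exists (Rmin m (f n)). split; [apply Rmin_pos; auto|].
  intros k Hk. destruct (Nat.eq_dec k n) as [->|]; [apply Rmin_r|].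
  eapply Rle_trans; [apply Rmin_l|apply Hle; lia].
Qed.

Definition rcount (n : nat) (P : nat -> Prop) : R := rsum n (fun i => rwhen (P i) 1).

Lemma rcount_zero n (P : nat -> Prop) : (forall i, (i < n)%nat -> ~ P i) -> rcount n P = 0.
Proof.
  intro H. unfold rcount. rewrite <- (rsum_zero n). apply rsum_ext; intros; apply rwhen_false; auto.
Qed.

Lemma rcount_length n (P : nat -> Prop) :
  rcount n P = INR (length (filter (fun i => if excluded_middle_informative (P i) then true else false)
                                   (seq 0 n))).
Proof.
  induction n as [|n IH]; [reflexivity|]. unfold rcount in *; simpl rsum.
  rewrite IH, seq_S, filter_app, length_app, plus_INR. simpl.
  unfold rwhen; destruct excluded_middle_informative; simpl; lra.
Qed.

Lemma rcount_le_injective n (P : nat -> Prop) (j : nat -> nat) m :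
  (forall i, (i < n)%nat -> P i -> (j i < m)%nat) ->
  (forall i i', (i < n)%nat -> (i' < n)%nat -> P i -> P i' -> j i = j i' -> i = i') ->
  rcount n P <= INR m.
Proof.
  intros Hrange Hinj. rewrite rcount_length. apply le_INR.
  set (l := filter _ (seq 0 n)).
  assert (Hl : forall i, In i l -> (i < n)%nat /\ P i).
  { intros i Hi. apply filter_In in Hi as [Hi Hs]. apply in_seq in Hi.
    destruct excluded_middle_informative; [split; [lia|auto]|discriminate]. }
  rewrite <- (length_map j), <- (length_seq m 0). apply NoDup_incl_length.
  - apply NoDup_map_NoDup_ForallPairs; [|apply NoDup_filter, seq_NoDup].
    intros i i' Hi Hi' E. destruct (Hl i Hi), (Hl i' Hi'). apply Hinj; auto.
  - intros x Hx. apply in_map_iff in Hx as [i [<- Hi]]. destruct (Hl i Hi).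
    apply in_seq. split; [lia|]. simpl. apply Hrange; auto.
Qed.

Section PairWeight.
Variables (Nv Nu : nat) (Rel : nat -> nat -> nat -> Prop) (a b : nat -> R).
Hypothesis a_nonneg : forall v, (v < Nv)%nat -> 0 <= a v.
Hypothesis b_nonneg : forall u, (u < Nu)%nat -> 0 <= b u.

Definition pair_weight (w : nat) : R :=
  rsum Nv (fun v => rsum Nu (fun u => rwhen (Rel w v u) (a v * b u))).

Lemma pair_weight_nonneg w : 0 <= pair_weight w.
Proof.
  apply rsum_nonneg; intros; apply rsum_nonneg; intros.
  apply rwhen_nonneg, Rmult_le_pos; auto.
Qed.

(* The weight is at most the number of related pairs times their largest product, and the
   [p]-th power of that product is at most the sum of all the related [p]-th powers. *)
Lemma rpow_pair_weight_le w p M :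
  0 <= p -> 0 <= M -> rsum Nv (fun v => rcount Nu (Rel w v)) <= M ->
  rpow (pair_weight w) p <=
    rpow M p * rsum Nv (fun v => rsum Nu (fun u => rwhen (Rel w v u) (rpow (a v) p * rpow (b u) p))).
Proof.
  intros Hp HM Hcount.
  destruct (exists_bound_rpow_le_rsum2 p Nv Nu (fun v u => a v * b u) (Rel w)) as [m [Hm [Hmax Hsum]]];
    [auto|intros; apply Rmult_le_pos; auto|].
  assert (Hw : pair_weight w <= M * m).
  { apply Rle_trans with (m * rsum Nv (fun v => rcount Nu (Rel w v))); [|nra].
    rewrite <- rsum_scal. apply rsum_le; intros v Hv.
    unfold rcount. rewrite <- rsum_scal. apply rsum_le; intros u Hu.
    unfold rwhen; destruct excluded_middle_informative; [rewrite Rmult_1_r; auto|lra]. }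
  eapply Rle_trans; [apply rpow_le; [auto|split; [apply pair_weight_nonneg|exact Hw]]|].
  rewrite rpow_mult by auto. apply Rmult_le_compat_l; [apply rpow_nonneg|].
  eapply Rle_trans; [exact Hsum|]. apply Req_le, rsum_ext; intros v Hv; apply rsum_ext; intros u Hu.
  rewrite rpow_mult; auto.
Qed.

Lemma rsum_rpow_pair_weight_le Nw p M M' :
  0 <= p -> 0 <= M -> 0 <= M' ->
  (forall w, (w < Nw)%nat -> rsum Nv (fun v => rcount Nu (Rel w v)) <= M) ->
  (forall v u, (v < Nv)%nat -> (u < Nu)%nat -> rcount Nw (fun w => Rel w v u) <= M') ->
  rsum Nw (fun w => rpow (pair_weight w) p) <=
    rpow M p * M' * (rsum Nv (fun v => rpow (a v) p) * rsum Nu (fun u => rpow (b u) p)).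
Proof.
  intros Hp HM HM' Hrow Hcol.
  eapply Rle_trans; [apply rsum_le; intros w Hw; apply (rpow_pair_weight_le w p M); auto|].
  rewrite rsum_scal, Rmult_assoc. apply Rmult_le_compat_l; [apply rpow_nonneg|].
  rewrite rsum_swap.
  apply Rle_trans with (rsum Nv (fun v => rsum Nu (fun u => M' * (rpow (a v) p * rpow (b u) p)))).
  - apply rsum_le; intros v Hv. rewrite rsum_swap. apply rsum_le; intros u Hu.
    apply Rle_trans with (rsum Nw (fun w => (rpow (a v) p * rpow (b u) p) * rwhen (Rel w v u) 1)).
    + apply Req_le, rsum_ext; intros; apply rwhen_scale.
    + rewrite rsum_scal, (Rmult_comm M'). apply Rmult_le_compat_l; [|apply Hcol; auto].
      apply Rmult_le_pos; apply rpow_nonneg.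
  - apply Req_le.
    transitivity (M' * rsum Nv (fun v => rpow (a v) p * rsum Nu (fun u => rpow (b u) p))).
    + rewrite <- rsum_scal. apply rsum_ext; intros v Hv.
      rewrite <- !rsum_scal. apply rsum_ext; intros; ring.
    + f_equal. rewrite (Rmult_comm (rsum Nv _)), <- rsum_scal. apply rsum_ext; intros; ring.
Qed.

Lemma pair_weight_dominates Nw (meets : nat -> Prop) :
  rsum Nv (fun v => rsum Nu (fun u =>
     rwhen (exists w, (w < Nw)%nat /\ meets w /\ Rel w v u) (a v * b u))) <=
  rsum Nw (fun w => rwhen (meets w) (pair_weight w)).
Proof.
  apply Rle_trans with
    (rsum Nv (fun v => rsum Nu (fun u => a v * b u * rsum Nw (fun w => rwhen (meets w /\ Rel w v u) 1)))).
  - apply rsum_le; intros v Hv; apply rsum_le; intros u Hu. rewrite rwhen_scale.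
    apply Rmult_le_compat_l; [apply Rmult_le_pos; auto|].
    unfold rwhen at 1; destruct excluded_middle_informative as [[w [Hw Hmw]]|].
    + eapply Rle_trans; [|apply (rsum_term_le _ _ w); [intros; apply rwhen_nonneg; lra|auto]].
      cbv beta; rewrite rwhen_true by auto; lra.
    + apply rsum_nonneg; intros; apply rwhen_nonneg; lra.
  - apply Req_le. unfold pair_weight.
    transitivity (rsum Nv (fun v => rsum Nw (fun w => rsum Nu (fun u =>
                    rwhen (meets w) (rwhen (Rel w v u) (a v * b u)))))).
    + apply rsum_ext; intros v Hv. rewrite <- rsum_swap. apply rsum_ext; intros u Hu.
      rewrite <- rsum_scal. apply rsum_ext; intros w Hw.
      unfold rwhen; repeat destruct excluded_middle_informative; tauto || lra.
    + rewrite rsum_swap. apply rsum_ext; intros w Hw.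
      unfold rwhen at 3; destruct excluded_middle_informative.
      * apply rsum_ext; intros; apply rsum_ext; intros; apply rwhen_true; auto.
      * rewrite <- (rsum_zero Nv). apply rsum_ext; intros.
        rewrite <- (rsum_zero Nu). apply rsum_ext; intros; apply rwhen_false; auto.
Qed.

End PairWeight.

Lemma ContOn01_reflect {Z : Type} (d : Z -> Z -> R) (g : R -> Z) :
  ContOn01 d g -> ContOn01 d (fun t => g (1 - t)).
Proof.
  intros Hg t Ht e He. destruct (Hg (1 - t) ltac:(lra) e He) as [de [Hde Hs]].
  exists de; split; auto. intros s Hs1 Hs2. apply Hs; [lra|].
  replace (1 - s - (1 - t)) with (- (s - t)) by ring. rewrite Rabs_Ropp; auto.
Qed.

Lemma ContOn01_affine {Z : Type} (d : Z -> Z -> R) (g : R -> Z) t0 t1 :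
  ContOn01 d g -> 0 <= t0 <= 1 -> 0 <= t1 <= 1 -> ContOn01 d (fun t => g (t0 + t * (t1 - t0))).
Proof.
  intros Hg H0 H1 t Ht e He.
  assert (Hin : forall s, 0 <= s <= 1 -> 0 <= t0 + s * (t1 - t0) <= 1) by (intros; nra).
  assert (0 <= Rabs (t1 - t0)) by apply Rabs_pos.
  destruct (Hg _ (Hin t Ht) e He) as [de [Hde Hs]].
  exists (de / (Rabs (t1 - t0) + 1)). split; [apply Rdiv_lt_0_compat; lra|].
  intros s Hs1 Hs2. apply Hs; [auto|].
  replace (t0 + s * (t1 - t0) - (t0 + t * (t1 - t0))) with ((s - t) * (t1 - t0)) by ring.
  rewrite Rabs_mult. assert (0 <= Rabs (s - t)) by apply Rabs_pos.
  apply Rmult_lt_compat_r with (r := Rabs (t1 - t0) + 1) in Hs2; [|lra].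
  unfold Rdiv in Hs2. rewrite Rmult_assoc, Rinv_l, Rmult_1_r in Hs2 by lra. nra.
Qed.

Lemma ContOn01_comp_lipschitz {Z : Type} (d : Z -> Z -> R) (g : R -> Z) (f : Z -> Z) (B : Z -> Prop) K :
  0 < K -> ContOn01 d g -> (forall t, 0 <= t <= 1 -> B (g t)) ->
  (forall x y, B x -> B y -> d (f x) (f y) <= K * d x y) -> ContOn01 d (fun t => f (g t)).
Proof.
  intros HK Hg HB Hf t Ht e He.
  destruct (Hg t Ht (e / K)) as [de [Hde Hs]]; [apply Rdiv_lt_0_compat; auto|].
  exists de; split; auto. intros s Hs1 Hs2.
  eapply Rle_lt_trans; [apply Hf; apply HB; auto|].
  assert (A := Hs s Hs1 Hs2). apply Rmult_lt_compat_l with (r := K) in A; auto.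
  replace (K * (e / K)) with e in A by (field; lra). lra.
Qed.

Lemma first_crossing (phi : R -> R) a t0 ts :
  ContOn01 Rdist phi -> 0 <= t0 <= ts -> ts <= 1 -> phi t0 < a -> a <= phi ts ->
  exists t1, t0 <= t1 <= ts /\ a <= phi t1 /\ forall u, t0 <= u <= t1 -> phi u <= a.
Proof.
  intros Hphi Ht0 Hts Ha Hb. unfold Rdist in Hphi.
  set (S := fun t => t0 <= t <= ts /\ forall u, t0 <= u <= t -> phi u < a).
  assert (HS0 : S t0) by (split; [lra|intros u Hu; replace u with t0 by lra; auto]).
  destruct (completeness S) as [t1 [Hub Hlub]]; [exists ts; intros t [Ht _]; lra|eauto|].
  assert (Ht1 : t0 <= t1 <= ts) by (split; [apply Hub, HS0|apply Hlub; intros t [Ht _]; lra]).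
  assert (Hbelow : forall u, t0 <= u < t1 -> phi u < a).
  { intros u Hu. apply NNPP; intro Hn. assert (t1 <= u); [|lra].
    apply Hlub. intros t [Ht Ht']. apply Rnot_lt_le; intro. apply Hn, Ht'; lra. }
  assert (Hle : phi t1 <= a).
  { apply Rnot_lt_le; intro Hgt. destruct (Req_dec t1 t0) as [->|]; [lra|].
    destruct (Hphi t1 ltac:(lra) (phi t1 - a)) as [de [Hde Hs]]; [lra|].
    set (u := Rmax t0 (t1 - de / 2)).
    assert (t0 <= u) by apply Rmax_l. assert (t1 - de / 2 <= u) by apply Rmax_r.
    assert (u < t1) by (unfold u, Rmax; destruct Rle_dec; lra).
    assert (A := Hs u ltac:(lra) ltac:(apply Rabs_def1; lra)). apply Rabs_def2 in A.
    assert (phi u < a) by (apply Hbelow; lra). lra. }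
  assert (Hge : a <= phi t1).
  { apply Rnot_lt_le; intro Hlt. destruct (Req_dec t1 ts) as [->|]; [lra|].
    destruct (Hphi t1 ltac:(lra) (a - phi t1)) as [de [Hde Hs]]; [lra|].
    set (t' := Rmin ts (t1 + de / 2)).
    assert (t' <= ts) by apply Rmin_l. assert (t' <= t1 + de / 2) by apply Rmin_r.
    assert (t1 < t') by (unfold t', Rmin; destruct Rle_dec; lra).
    assert (t' <= t1); [|lra].
    apply Hub. split; [lra|]. intros u Hu. destruct (Rlt_le_dec u t1); [apply Hbelow; lra|].
    assert (A := Hs u ltac:(lra) ltac:(apply Rabs_def1; lra)). apply Rabs_def2 in A. lra. }
  exists t1. split; [auto|split; [auto|]]. intros u Hu.
  destruct (Rlt_le_dec u t1); [left; apply Hbelow; lra|replace u with t1 by lra; auto].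
Qed.

Lemma first_exit (phi : R -> R) a t0 ts :
  ContOn01 Rdist phi -> 0 <= t0 <= 1 -> 0 <= ts <= 1 -> phi t0 < a -> a <= phi ts ->
  exists t1, 0 <= t1 <= 1 /\ a <= phi t1 /\
    forall s, 0 <= s <= 1 -> phi (t0 + s * (t1 - t0)) <= a.
Proof.
  intros Hphi Ht0 Hts Ha Hb. destruct (Rle_dec t0 ts).
  - destruct (first_crossing phi a t0 ts) as [t1 [H1 [H2 H3]]]; try lra; auto.
    exists t1. split; [lra|split; auto]. intros s Hs. apply H3. nra.
  - destruct (first_crossing (fun t => phi (1 - t)) a (1 - t0) (1 - ts)) as [t1 [H1 [H2 H3]]];
      try lra; try (apply ContOn01_reflect; auto);
      try (replace (1 - (1 - t0)) with t0 by ring); try (replace (1 - (1 - ts)) with ts by ring); auto.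
    exists (1 - t1). split; [lra|split; auto]. intros s Hs.
    replace (t0 + s * (1 - t1 - t0)) with (1 - (1 - t0 + s * (t1 - (1 - t0)))) by ring.
    apply H3. nra.
Qed.

Section MetricSpace.
Context {Z : Type} (d : Z -> Z -> R).
Hypothesis d_metric : IsMetric d.

Lemma metric_nonneg x y : 0 <= d x y.
Proof. apply d_metric. Qed.

Lemma metric_self x : d x x = 0.
Proof. apply d_metric; auto. Qed.

Lemma metric_sym x y : d x y = d y x.
Proof. apply d_metric. Qed.

Lemma metric_triangle x y z : d x z <= d x y + d y z.
Proof. apply d_metric. Qed.

Lemma metric_triangle_from c x y : d x y <= d c x + d c y.
Proof. rewrite (metric_sym c x). apply metric_triangle. Qed.

Lemma ContOn01_dist_from (g : R -> Z) c : ContOn01 d g -> ContOn01 Rdist (fun t => d c (g t)).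
Proof.
  intros Hg t Ht e He. destruct (Hg t Ht e He) as [de [Hde Hs]].
  exists de; split; auto. intros s Hs1 Hs2. unfold Rdist.
  assert (A := metric_triangle c (g s) (g t)). assert (B := metric_triangle c (g t) (g s)).
  rewrite (metric_sym (g t)) in B. specialize (Hs s Hs1 Hs2). apply Rabs_def1; lra.
Qed.

Definition rescales_ball (L0 : R) (z : Z) (r : R) (f : Z -> Z) : Prop :=
  forall x y, ball d z r x -> ball d z r y ->
    1 / L0 * (d x y / r) <= d (f x) (f y) /\ d (f x) (f y) <= L0 * (d x y / r).

Definition packing_bound (lam : R) (P : nat) : Prop :=
  forall N (sel : nat -> Prop) (q : nat -> Z) x r, 0 < r ->
    (forall i, (i < N)%nat -> sel i -> d x (q i) < r) ->
    (forall i j, (i < N)%nat -> (j < N)%nat -> sel i -> sel j -> i <> j -> lam * r <= d (q i) (q j)) ->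
    rcount N sel <= INR P.

Lemma packing_bound_weaken lam lam' P : lam <= lam' -> packing_bound lam P -> packing_bound lam' P.
Proof.
  intros Hlam HP N sel q x r Hr Hin Hsep. apply (HP N sel q x r Hr Hin).
  intros i j Hi Hj Hsi Hsj Hne. specialize (Hsep i j Hi Hj Hsi Hsj Hne). nra.
Qed.

Section Compact.
Hypothesis d_compact : CompactSpace d.

Fixpoint greedy_list (next : list Z -> Z) (n : nat) : list Z :=
  match n with O => nil | S m => greedy_list next m ++ (next (greedy_list next m) :: nil) end.

Lemma greedy_list_incl next m n : (m <= n)%nat -> incl (greedy_list next m) (greedy_list next n).
Proof. induction 1; [apply incl_refl|]. simpl. apply incl_appl; auto. Qed.

(* Otherwise a greedy sequence would be [e]-separated and have no convergent subsequence. *)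
Lemma compact_finite_net e : 0 < e -> exists L : list Z, forall z, exists y, In y L /\ d y z < e.
Proof.
  intros He. apply NNPP; intro Hn.
  assert (Hfar : forall L : list Z, exists z, forall y, In y L -> e <= d y z).
  { intro L. apply NNPP; intro H. apply Hn. exists L. intro z. apply NNPP; intro H'. apply H.
    exists z. intros y Hy. apply Rnot_lt_le. intro. apply H'. exists y; auto. }
  destruct (choice _ Hfar) as [next Hnext].
  set (u := fun n => next (greedy_list next n)).
  assert (Hu : forall m n, (m < n)%nat -> e <= d (u m) (u n)).
  { intros m n Hmn. apply Hnext. apply (greedy_list_incl next (S m) n); [lia|].
    simpl. apply in_or_app; right; left; auto. }
  destruct (d_compact u) as [phi [z [Hphi Hz]]]. destruct (Hz (e / 2)) as [N HN]; [lra|].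
  assert (A1 := HN N ltac:(lia)). assert (A2 := HN (S N) ltac:(lia)).
  assert (A3 := Hu _ _ (Hphi N (S N) ltac:(lia))).
  assert (A4 := metric_triangle (u (phi N)) z (u (phi (S N)))). rewrite (metric_sym z) in A4. lra.
Qed.

Lemma compact_separated_count_le e : 0 < e -> exists P : nat,
  forall N (sel : nat -> Prop) (q : nat -> Z),
    (forall i j, (i < N)%nat -> (j < N)%nat -> sel i -> sel j -> i <> j -> e <= d (q i) (q j)) ->
    rcount N sel <= INR P.
Proof.
  intros He. destruct (compact_finite_net (e / 2)) as [L HL]; [lra|].
  exists (length L). intros N sel q Hsep.
  assert (Hj : forall i, exists j, (j < length L)%nat /\ exists y, nth_error L j = Some y /\ d y (q i) < e / 2).
  { intro i. destruct (HL (q i)) as [y [Hy Hd]]. destruct (In_nth_error _ _ Hy) as [j Hj].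
    exists j. split; [apply nth_error_Some; rewrite Hj; discriminate|eauto]. }
  destruct (choice _ Hj) as [jf Hjf].
  apply (rcount_le_injective N sel jf); [intros; apply Hjf|].
  intros i i' Hi Hi' Hs Hs' Heq. destruct (Nat.eq_dec i i') as [|Hne]; auto. exfalso.
  destruct (Hjf i) as [_ [y [Hy Hdy]]]. destruct (Hjf i') as [_ [y' [Hy' Hdy']]].
  rewrite Heq, Hy' in Hy. injection Hy as Eyy. rewrite Eyy in Hdy'.
  assert (A := Hsep i i' Hi Hi' Hs Hs' Hne). assert (B := metric_triangle_from y (q i) (q i')). lra.
Qed.

Lemma compact_bounded : exists B, forall x y, d x y <= B.
Proof.
  apply NNPP; intro Hn.
  assert (H : forall B, exists x y, B < d x y).
  { intro B. apply NNPP; intro H; apply Hn. exists B. intros x y. apply Rnot_lt_le.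
    intro. apply H. eauto. }
  destruct (H 0) as [x0 _].
  assert (Hfar : forall n : nat, exists y, INR n < d x0 y).
  { intro n. destruct (H (2 * INR n)) as [x [y Hxy]]. assert (A := metric_triangle_from x0 x y).
    destruct (Rlt_le_dec (INR n) (d x0 x)); [exists x|exists y]; lra. }
  destruct (choice _ Hfar) as [u Hu].
  destruct (d_compact u) as [phi [z [Hphi Hz]]]. destruct (Hz 1) as [N HN]; [lra|].
  destruct (archimed (d x0 z + 1)) as [Hup _].
  set (m := max N (Z.to_nat (up (d x0 z + 1)))).
  assert (Hm : d x0 z + 1 < INR m).
  { assert (INR (Z.to_nat (up (d x0 z + 1))) <= INR m) by (apply le_INR; lia).
    destruct (Z_le_gt_dec (up (d x0 z + 1)) 0) as [Hle|Hgt].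
    - apply IZR_le in Hle. assert (0 <= d x0 z) by apply metric_nonneg. pose proof (pos_INR m). lra.
    - rewrite INR_IZR_INZ, Z2Nat.id in H0 by lia. lra. }
  assert (Hphim : (m <= phi m)%nat).
  { clear - Hphi. induction m; [lia|]. specialize (Hphi m (S m) ltac:(lia)). lia. }
  assert (A1 := HN m ltac:(lia)). assert (A2 := Hu (phi m)).
  assert (A3 := metric_triangle x0 z (u (phi m))). rewrite (metric_sym z) in A3.
  apply le_INR in Hphim. lra.
Qed.

Lemma exists_diameter (z0 : Z) : exists D, IsDiamZ d D.
Proof.
  destruct compact_bounded as [B HB].
  destruct (completeness (fun t => exists x y, t = d x y)) as [D HD].
  - exists B; intros t [x [y ->]]; auto.
  - exists (d z0 z0), z0, z0; auto.
  - exists D; exact HD.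
Qed.

(* Blowing a ball of radius [r <= D] up to unit size turns [lam * r]-separation into
   [lam / L0]-separation, so the count is that of a separated set in the compact space. *)
Lemma exists_packing_bound D L0 :
  0 < D -> 1 <= L0 -> (forall z r, 0 < r <= D -> exists f, rescales_ball L0 z r f) ->
  forall lam, 0 < lam -> exists P, packing_bound lam P.
Proof.
  intros HD HL SS lam Hlam.
  destruct (compact_separated_count_le (lam / L0)) as [P1 H1]; [apply Rdiv_lt_0_compat; lra|].
  destruct (compact_separated_count_le (lam * D)) as [P2 H2]; [nra|].
  exists (max P1 P2). intros N sel q x r Hr Hin Hsep.
  destruct (Rle_dec r D).
  - destruct (SS x r) as [f Hf]; [lra|].
    eapply Rle_trans; [apply (H1 N sel (fun i => f (q i)))|apply le_INR; lia].
    intros i j Hi Hj Hsi Hsj Hne. eapply Rle_trans; [|apply Hf; unfold ball; auto].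
    assert (A := Hsep i j Hi Hj Hsi Hsj Hne).
    assert (lam <= d (q i) (q j) / r) by (apply Rmult_le_reg_r with r; [auto|]; field_simplify; lra).
    replace (lam / L0) with (1 / L0 * lam) by (field; lra).
    apply Rmult_le_compat_l; auto. apply Rlt_le, Rdiv_lt_0_compat; lra.
  - eapply Rle_trans; [apply (H2 N sel q)|apply le_INR; lia].
    intros i j Hi Hj Hsi Hsj Hne. assert (A := Hsep i j Hi Hj Hsi Hsj Hne). nra.
Qed.

End Compact.
End MetricSpace.

Lemma glb_le_scaled (E : R -> Prop) m K X :
  is_glb E m -> 0 <= K -> (forall x, E x -> X <= K * x) -> X <= K * m.
Proof.
  intros [Hlow Hgreat] HK HX. destruct (Req_dec K 0) as [->|].
  - destruct (classic (exists x, E x)) as [[x Hx]|Hne]; [specialize (HX x Hx); lra|].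
    assert (m + 1 <= m); [|lra]. apply Hgreat. intros x Hx. exfalso; eauto.
  - assert (HXK : X / K <= m).
    { apply Hgreat. intros x Hx. specialize (HX x Hx).
      apply Rmult_le_reg_r with K; [lra|]. replace (X / K * K) with X by (field; lra). lra. }
    replace X with (K * (X / K)) by (field; lra). apply Rmult_le_compat_l; lra.
Qed.

Section Modulus.
Context {Z : Type}.
Variables (p : R) (F : Curve Z -> Prop).

Lemma Mp_nonneg (A : Approx Z) rho : 0 <= Mp A p rho.
Proof. apply rsum_nonneg; intros; apply rpow_nonneg. Qed.

Lemma ModValues_nonneg (A : Approx Z) x : ModValues p F A x -> 0 <= x.
Proof. intros [rho [_ [_ ->]]]. apply Mp_nonneg. Qed.

Lemma IsMod_nonneg (A : Approx Z) m : IsMod p F A m -> 0 <= m.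
Proof. intros [_ Hgreat]. apply Hgreat, ModValues_nonneg. Qed.

Lemma IsMod_empty_family (A : Approx Z) m : (forall g, ~ F g) -> IsMod p F A m -> m <= 0.
Proof.
  intros HF [Hlow _]. replace 0 with (Mp A p (fun _ => 0)).
  - apply Hlow. exists (fun _ => 0). split; [intros; lra|]. split; [|auto].
    intros g Hg; exfalso; eapply HF; eauto.
  - unfold Mp. rewrite (rsum_ext _ _ (fun _ => 0)) by (intros; apply rpow_0). apply rsum_zero.
Qed.

(* Some vertex carries at least the average [1 / N] of an admissible density. *)
Lemma IsMod_ge_inv_card (A : Approx Z) m :
  0 <= p -> (exists g, F g) -> (0 < a_N A)%nat -> IsMod p F A m -> rpow (/ INR (a_N A)) p <= m.
Proof.
  intros Hp [g Hg] HN [_ Hgreat]. apply Hgreat. intros x [rho [Hrho [Hadm ->]]].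
  set (N := a_N A) in *. assert (HNp : 0 < INR N) by (apply lt_0_INR; auto).
  assert (HL : 1 <= rsum N rho).
  { eapply Rle_trans; [apply (Hadm g Hg)|]. apply rsum_le; intros i Hi.
    unfold rwhen; destruct excluded_middle_informative; [lra|apply Hrho; auto]. }
  destruct (classic (exists i, (i < N)%nat /\ / INR N <= rho i)) as [[i [Hi Hri]]|Hn].
  - eapply Rle_trans; [|apply (rsum_term_le _ _ i); [intros; apply rpow_nonneg|auto]].
    apply rpow_le; auto. split; [left; apply Rinv_0_lt_compat|]; auto.
  - exfalso. assert (rsum N rho < INR N * / INR N); [|rewrite Rinv_r in H; lra].
    apply rsum_lt_const; auto. intros i Hi. apply Rnot_le_lt. intro; apply Hn; eauto.
Qed.

Lemma IsMod_le_mul (Ak Al : Approx Z) Mk Ml K X :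
  IsMod p F Ak Mk -> IsMod p F Al Ml -> 0 <= K ->
  (forall x y, ModValues p F Ak x -> ModValues p F Al y -> X <= K * x * y) -> X <= K * Mk * Ml.
Proof.
  intros HMk HMl HK HX.
  assert (HMk0 := IsMod_nonneg _ _ HMk).
  apply (glb_le_scaled _ _ _ _ HMl); [nra|]. intros y Hy.
  assert (Hy0 := ModValues_nonneg _ _ Hy).
  replace (K * Mk * y) with (K * y * Mk) by ring.
  apply (glb_le_scaled _ _ _ _ HMk); [nra|]. intros x Hx.
  replace (K * y * x) with (K * x * y) by ring. auto.
Qed.

Lemma IsMod_le_pair_weight (A : Approx Z) m Nv Nu (a b : nat -> R) Rel M M' :
  1 <= p -> 0 <= M -> 0 <= M' -> IsMod p F A m ->
  (forall v, (v < Nv)%nat -> 0 <= a v) -> (forall u, (u < Nu)%nat -> 0 <= b u) ->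
  (forall g, F g -> 1 <= rsum Nv (fun v => rsum Nu (fun u =>
       rwhen (exists w, (w < a_N A)%nat /\ curve_meets g (a_V A w) /\ Rel w v u) (a v * b u)))) ->
  (forall w, (w < a_N A)%nat -> rsum Nv (fun v => rcount Nu (Rel w v)) <= M) ->
  (forall v u, (v < Nv)%nat -> (u < Nu)%nat -> rcount (a_N A) (fun w => Rel w v u) <= M') ->
  m <= rpow M p * M' * (rsum Nv (fun v => rpow (a v) p) * rsum Nu (fun u => rpow (b u) p)).
Proof.
  intros Hp HM HM' [Hlow _] Ha Hb Hadm Hrow Hcol.
  apply Rle_trans with (Mp A p (pair_weight Nv Nu Rel a b)).
  - apply Hlow. exists (pair_weight Nv Nu Rel a b).
    split; [intros; apply pair_weight_nonneg; auto|]. split; [|reflexivity].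
    intros g Hg. eapply Rle_trans; [apply (Hadm g Hg)|]. apply pair_weight_dominates; auto.
  - apply rsum_rpow_pair_weight_le; auto; lra.
Qed.

End Modulus.

Lemma half_pow_pos k : 0 < (/ 2) ^ k.
Proof. apply pow_lt; lra. Qed.

Lemma half_pow_le_1 k : (/ 2) ^ k <= 1.
Proof. induction k; simpl; [lra|]. pose proof (half_pow_pos k). lra. Qed.

Lemma half_pow_antitone k K : (k <= K)%nat -> (/ 2) ^ K <= (/ 2) ^ k.
Proof.
  intro H. replace K with (k + (K - k))%nat by lia. rewrite pow_add.
  pose proof (half_pow_le_1 (K - k)). pose proof (half_pow_pos k). nra.
Qed.

Lemma half_pow_eventually_lt e : 0 < e -> exists K0, forall k, (K0 <= k)%nat -> (/ 2) ^ k < e.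
Proof.
  intros He. destruct (pow_lt_1_zero (/ 2) ltac:(rewrite Rabs_pos_eq; lra) e He) as [K0 HK0].
  exists K0. intros k Hk. specialize (HK0 k Hk). rewrite Rabs_pos_eq in HK0; [auto|apply Rlt_le, half_pow_pos].
Qed.

Lemma F0_diameter_ge {Z : Type} (d : Z -> Z -> R) D d0 (g : Curve Z) : IsDiamZ d D -> F0 d d0 g -> d0 <= D.
Proof.
  intros HD [_ [Dg [Hlub Hle]]]. eapply Rle_trans; [exact Hle|]. apply Hlub.
  intros u [s [t [_ [_ ->]]]]. apply HD. eauto.
Qed.

Section Geometry.
Context {Z : Type} (d : Z -> Z -> R).
Hypothesis d_metric : IsMetric d.

Lemma approx_centers_separated kappa k (A : Approx Z) i j :
  IsKappaApproxScale d kappa k A -> (i < a_N A)%nat -> (j < a_N A)%nat -> i <> j ->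
  / kappa * (/ 2) ^ k <= d (a_c A i) (a_c A j).
Proof.
  intros [_ [_ Hdisj]] Hi Hj Hne. apply Rnot_lt_le; intro Hlt.
  apply (Hdisj i j (a_c A j) Hi Hj Hne); unfold ball; auto.
  rewrite metric_self by auto. pose proof (metric_nonneg d d_metric (a_c A i) (a_c A j)). lra.
Qed.

Lemma approx_vertex_near_center kappa k (A : Approx Z) i y :
  IsKappaApproxScale d kappa k A -> (i < a_N A)%nat -> a_V A i y -> d (a_c A i) y < kappa * (/ 2) ^ k.
Proof. intros [_ [Hball _]] Hi Hy. apply (proj2 (Hball i Hi)); auto. Qed.

Lemma F0_of_bounded (g : Curve Z) d0 Bd :
  ContOn01 d g -> (forall s t, 0 <= s <= 1 -> 0 <= t <= 1 -> d (g s) (g t) <= Bd) ->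
  (exists s t, 0 <= s <= 1 /\ 0 <= t <= 1 /\ d0 <= d (g s) (g t)) -> F0 d d0 g.
Proof.
  intros Hg HB [s0 [t0 [Hs [Ht Hd]]]]. split; auto.
  set (E := fun u => exists s t, 0 <= s <= 1 /\ 0 <= t <= 1 /\ u = d (g s) (g t)).
  destruct (completeness E) as [D HD].
  - exists Bd. intros u [s [t [H1 [H2 ->]]]]. auto.
  - exists (d (g s0) (g t0)), s0, t0; auto.
  - exists D. split; auto. eapply Rle_trans; [exact Hd|]. apply HD. exists s0, t0; auto.
Qed.

Lemma F0_leaves_ball (g : Curve Z) d0 c r :
  F0 d d0 g -> 2 * r < d0 -> exists t, 0 <= t <= 1 /\ r <= d c (g t).
Proof.
  intros [_ [D [HD Hd0]]] Hr. apply NNPP; intro Hn.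
  assert (D <= 2 * r); [|lra].
  apply HD. intros u [s [t [Hs [Ht ->]]]].
  assert (d c (g s) < r) by (apply Rnot_le_lt; intro; apply Hn; eauto).
  assert (d c (g t) < r) by (apply Rnot_le_lt; intro; apply Hn; eauto).
  pose proof (metric_triangle_from d d_metric c (g s) (g t)). lra.
Qed.

Lemma exit_arc (g : Curve Z) d0 c s t0 :
  F0 d d0 g -> 0 < s < d0 -> 0 <= t0 <= 1 -> d c (g t0) < s / 4 ->
  exists t1, 0 <= t1 <= 1 /\ (forall t, 0 <= t <= 1 -> d c (g (t0 + t * (t1 - t0))) <= s / 2) /\
    s / 4 <= d (g t0) (g t1).
Proof.
  intros Hg Hs Ht0 Hc. destruct (F0_leaves_ball g d0 c (s / 2) Hg ltac:(lra)) as [ts [Hts Hfar]].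
  destruct (first_exit (fun t => d c (g t)) (s / 2) t0 ts) as [t1 [Ht1 [Hexit Hin]]];
    try lra; auto.
  - apply ContOn01_dist_from; auto. apply Hg.
  - exists t1. split; [auto|split; [auto|]].
    pose proof (metric_triangle d d_metric c (g t0) (g t1)). lra.
Qed.

Lemma rescaled_arc_in_F0 (eta : Curve Z) (f : Z -> Z) L0 d0 c s :
  0 < s -> 1 <= L0 -> d0 <= / (4 * L0) -> rescales_ball d L0 c s f -> ContOn01 d eta ->
  (forall t, 0 <= t <= 1 -> d c (eta t) <= s / 2) -> s / 4 <= d (eta 0) (eta 1) ->
  F0 d d0 (fun t => f (eta t)).
Proof.
  intros Hs HL Hd0 Hf Heta Hin Hends.
  assert (Hball : forall t, 0 <= t <= 1 -> ball d c s (eta t)) by (intros t Ht; specialize (Hin t Ht); unfold ball; lra).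
  assert (HL0 : 0 < 1 / L0) by (apply Rdiv_lt_0_compat; lra).
  apply F0_of_bounded with (Bd := L0).
  - apply ContOn01_comp_lipschitz with (B := ball d c s) (K := L0 / s); auto.
    + apply Rdiv_lt_0_compat; lra.
    + intros x y Hx Hy. destruct (Hf x y Hx Hy) as [_ H]. unfold Rdiv in *. lra.
  - intros t1 t2 Ht1 Ht2. destruct (Hf _ _ (Hball t1 Ht1) (Hball t2 Ht2)) as [_ H].
    eapply Rle_trans; [exact H|].
    assert (d (eta t1) (eta t2) <= s).
    { pose proof (metric_triangle_from d d_metric c (eta t1) (eta t2)).
      pose proof (Hin t1 Ht1). pose proof (Hin t2 Ht2). lra. }
    assert (d (eta t1) (eta t2) / s <= 1) by (apply Rmult_le_reg_r with s; [auto|]; field_simplify; lra).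
    nra.
  - exists 0, 1. split; [lra|split; [lra|]].
    destruct (Hf _ _ (Hball 0 ltac:(lra)) (Hball 1 ltac:(lra))) as [H _].
    eapply Rle_trans; [|exact H].
    assert (1 / 4 <= d (eta 0) (eta 1) / s) by (apply Rmult_le_reg_r with s; [auto|]; field_simplify; lra).
    replace (/ (4 * L0)) with (1 / L0 * (1 / 4)) in Hd0 by (field; lra). nra.
Qed.

Lemma vertex_rescaled_curve kappa k l (Gk Gl Gkl : Approx Z) L0 d0 (f : Z -> Z) (g : Curve Z) v :
  1 <= kappa -> 1 <= L0 -> d0 <= / (4 * L0) -> 4 * kappa * (/ 2) ^ k < d0 ->
  IsKappaApproxScale d kappa k Gk -> IsKappaApproxScale d kappa l Gl ->
  IsKappaApproxScale d kappa (k + l) Gkl ->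
  rescales_ball d L0 (a_c Gk v) (4 * kappa * (/ 2) ^ k) f ->
  F0 d d0 g -> (v < a_N Gk)%nat -> curve_meets g (a_V Gk v) ->
  exists cv, F0 d d0 cv /\ forall u, (u < a_N Gl)%nat -> curve_meets cv (a_V Gl u) ->
    exists w, (w < a_N Gkl)%nat /\ curve_meets g (a_V Gkl w) /\
      d (a_c Gk v) (a_c Gkl w) < 4 * kappa * (/ 2) ^ k /\
      d (f (a_c Gkl w)) (a_c Gl u) < (kappa + L0 / 4) * (/ 2) ^ l.
Proof.
  intros Hk HL Hd0 Hsd0 HGk HGl HGkl Hf Hg Hv [t0 [Ht0 Hgt0]].
  pose proof (half_pow_pos k) as Hrk. pose proof (half_pow_pos l) as Hrl. pose proof (half_pow_le_1 l) as Hrl1.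
  set (rk := (/ 2) ^ k) in *. set (rl := (/ 2) ^ l) in *.
  set (s := 4 * kappa * rk) in *. set (c := a_c Gk v) in *.
  assert (Hs : 0 < s) by (unfold s; nra).
  assert (Hc : d c (g t0) < s / 4).
  { pose proof (approx_vertex_near_center _ _ _ _ _ HGk Hv Hgt0) as H. fold c rk in H. unfold s. lra. }
  destruct (exit_arc g d0 c s t0 Hg ltac:(lra) Ht0 Hc) as [t1 [Ht1 [Hin Hends]]].
  set (eta := fun t => g (t0 + t * (t1 - t0))).
  assert (Heta : ContOn01 d eta) by (apply ContOn01_affine; auto; apply Hg).
  exists (fun t => f (eta t)). split.
  { apply (rescaled_arc_in_F0 eta f L0 d0 c s); auto.
    unfold eta. replace (t0 + 0 * (t1 - t0)) with t0 by ring. replace (t0 + 1 * (t1 - t0)) with t1 by ring. auto. }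
  intros u Hu [tau [Htau Hmeet]].
  set (y := eta tau). set (T := t0 + tau * (t1 - t0)).
  assert (HT : 0 <= T <= 1) by (unfold T; nra).
  destruct HGkl as [Hcov Hcov_rest]. destruct (Hcov y) as [w [Hw Hwy]].
  exists w. split; [auto|split; [exists T; auto|]].
  assert (Hwy' : d (a_c Gkl w) y < kappa * rk * rl).
  { pose proof (approx_vertex_near_center _ _ _ _ _ (conj Hcov Hcov_rest) Hw Hwy) as Hnear.
    rewrite pow_add in Hnear. fold rk rl in Hnear. lra. }
  assert (Hcy : d c y <= s / 2) by (apply Hin; auto).
  assert (Hkr : kappa * rk * rl <= kappa * rk) by (rewrite Rmult_assoc; apply Rmult_le_compat_l; nra).
  assert (Hcw : d c (a_c Gkl w) < s).
  { pose proof (metric_triangle d d_metric c y (a_c Gkl w)) as Htri.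
    rewrite (metric_sym d d_metric y) in Htri. unfold s in *. lra. }
  split; [auto|].
  assert (Hscaled : d (f (a_c Gkl w)) (f y) < L0 * rl / 4).
  { assert (Hyb : ball d c s y) by (unfold ball; lra).
    destruct (Hf _ _ Hcw Hyb) as [_ Hup]. eapply Rle_lt_trans; [exact Hup|].
    assert (d (a_c Gkl w) y / s < rl / 4) by (apply Rmult_lt_reg_r with s; [auto|]; field_simplify; unfold s; nra).
    nra. }
  assert (Hyu : d (a_c Gl u) (f y) < kappa * rl) by (apply (approx_vertex_near_center _ _ _ _ _ HGl Hu Hmeet)).
  pose proof (metric_triangle d d_metric (f (a_c Gkl w)) (f y) (a_c Gl u)) as Htri.
  rewrite (metric_sym d d_metric (f y)) in Htri. lra.
Qed.

End Geometry.

Section Submultiplicativity.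
Context {Z : Type} (d : Z -> Z -> R).
Hypothesis d_metric : IsMetric d.
Variables (kappa L0 d0 : R) (G : nat -> Approx Z).
Hypotheses (kappa_ge1 : 1 <= kappa) (G_approx : IsKappaApprox d kappa G) (L0_ge1 : 1 <= L0)
  (d0_pos : 0 < d0) (d0_small : d0 < / (4 * L0)).

Definition fine_rel k l (F : nat -> Z -> Z) (w v u : nat) : Prop :=
  d (a_c (G k) v) (a_c (G (k + l)) w) < 4 * kappa * (/ 2) ^ k /\
  d (F v (a_c (G (k + l)) w)) (a_c (G l) u) < (kappa + L0 / 4) * (/ 2) ^ l.

Definition fine_sep : R := / (4 * kappa * kappa * L0 * (kappa + L0 / 4)).

Lemma fine_sep_pos : 0 < fine_sep.
Proof. unfold fine_sep. apply Rinv_0_lt_compat. assert (0 < 4 * kappa * kappa * L0) by nra. nra. Qed.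

Lemma fine_sep_le_inv c : 0 < c <= 4 * kappa * kappa * L0 * (kappa + L0 / 4) -> fine_sep <= / c.
Proof. intros Hc. unfold fine_sep. apply Rinv_le_contravar; lra. Qed.

Lemma fine_rel_row_count k l F P w :
  packing_bound d fine_sep P ->
  rsum (a_N (G k)) (fun v => rcount (a_N (G l)) (fine_rel k l F w v)) <= INR P * INR P.
Proof.
  intros HP. pose proof (half_pow_pos k). pose proof (half_pow_pos l). pose proof (pos_INR P).
  set (s := 4 * kappa * (/ 2) ^ k). set (beta := kappa + L0 / 4).
  assert (Hbeta : 0 < beta) by (unfold beta; lra).
  assert (HPu : packing_bound d (/ (kappa * beta)) P).
  { apply (packing_bound_weaken d fine_sep); auto. apply fine_sep_le_inv. fold beta.
    assert (0 < kappa * beta) by nra. assert (1 <= 4 * kappa * L0) by nra. split; [auto|nra]. }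
  assert (HPv : packing_bound d (/ (4 * kappa * kappa)) P).
  { apply (packing_bound_weaken d fine_sep); auto. apply fine_sep_le_inv.
    assert (0 < 4 * kappa * kappa) by nra. assert (1 <= L0 * (kappa + L0 / 4)) by nra. split; [auto|nra]. }
  apply Rle_trans with (rsum (a_N (G k)) (fun v => INR P * rwhen (d (a_c (G k) v) (a_c (G (k + l)) w) < s) 1)).
  - apply rsum_le; intros v Hv.
    destruct (classic (d (a_c (G k) v) (a_c (G (k + l)) w) < s)) as [Hc|Hc].
    + rewrite rwhen_true, Rmult_1_r by auto.
      apply (HPu _ _ (a_c (G l)) (F v (a_c (G (k + l)) w)) (beta * (/ 2) ^ l)); [nra|intros u Hu []; auto|].
      intros i j Hi Hj _ _ Hne. replace (/ (kappa * beta) * (beta * (/ 2) ^ l)) with (/ kappa * (/ 2) ^ l) by (field; lra).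
      apply (approx_centers_separated d d_metric kappa l); auto.
    + rewrite rwhen_false by auto. rewrite rcount_zero by (intros u Hu []; auto). lra.
  - rewrite rsum_scal. apply Rmult_le_compat_l; [auto|].
    apply (HPv _ _ (a_c (G k)) (a_c (G (k + l)) w) s); [unfold s; nra|intros i Hi Hrel; rewrite metric_sym; auto|].
    intros i j Hi Hj _ _ Hne. replace (/ (4 * kappa * kappa) * s) with (/ kappa * (/ 2) ^ k) by (unfold s; field; lra).
    apply (approx_centers_separated d d_metric kappa k); auto.
Qed.

Lemma fine_rel_col_count k l F P v u :
  packing_bound d fine_sep P ->
  rescales_ball d L0 (a_c (G k) v) (4 * kappa * (/ 2) ^ k) (F v) ->
  rcount (a_N (G (k + l))) (fun w => fine_rel k l F w v u) <= INR P.
Proof.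
  intros HP HF. pose proof (half_pow_pos k). pose proof (half_pow_pos l).
  set (s := 4 * kappa * (/ 2) ^ k) in *. set (beta := kappa + L0 / 4).
  assert (Hs : 0 < s) by (unfold s; nra).
  apply (HP _ _ (fun w => F v (a_c (G (k + l)) w)) (a_c (G l) u) (beta * (/ 2) ^ l));
    [unfold beta; nra|intros w Hw [_ Hrel]; rewrite metric_sym; auto|].
  intros i j Hi Hj [Hi1 _] [Hj1 _] Hne. destruct (HF _ _ Hi1 Hj1) as [Hlow _].
  eapply Rle_trans; [|exact Hlow].
  pose proof (approx_centers_separated d d_metric kappa (k + l) (G (k + l)) i j (G_approx _) Hi Hj Hne) as Hsep.
  rewrite pow_add in Hsep.
  assert (Hratio : (/ 2) ^ l / (4 * kappa * kappa) <= d (a_c (G (k + l)) i) (a_c (G (k + l)) j) / s).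
  { apply Rmult_le_reg_r with s; [auto|]. unfold s. field_simplify; [|lra..].
    replace ((/ 2) ^ l * (/ 2) ^ k / kappa) with (/ kappa * ((/ 2) ^ k * (/ 2) ^ l)) by (field; lra). lra. }
  replace (fine_sep * (beta * (/ 2) ^ l)) with (1 / L0 * ((/ 2) ^ l / (4 * kappa * kappa)))
    by (unfold fine_sep, beta; field; lra).
  apply Rmult_le_compat_l; [apply Rlt_le, Rdiv_lt_0_compat; lra|auto].
Qed.

Lemma fine_rel_admissible k l F (a b : nat -> R) g :
  4 * kappa * (/ 2) ^ k < d0 ->
  (forall v, rescales_ball d L0 (a_c (G k) v) (4 * kappa * (/ 2) ^ k) (F v)) ->
  (forall v, (v < a_N (G k))%nat -> 0 <= a v) -> (forall g, F0 d d0 g -> 1 <= Lrho (G k) a g) ->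
  (forall u, (u < a_N (G l))%nat -> 0 <= b u) -> (forall g, F0 d d0 g -> 1 <= Lrho (G l) b g) ->
  F0 d d0 g ->
  1 <= rsum (a_N (G k)) (fun v => rsum (a_N (G l)) (fun u =>
         rwhen (exists w, (w < a_N (G (k + l)))%nat /\ curve_meets g (a_V (G (k + l)) w) /\
                          fine_rel k l F w v u) (a v * b u))).
Proof.
  intros Hsd0 HF Ha Hadma Hb Hadmb Hg.
  eapply Rle_trans; [apply (Hadma g Hg)|]. apply rsum_le; intros v Hv.
  destruct excluded_middle_informative as [Hmv|];
    [|apply rsum_nonneg; intros; apply rwhen_nonneg, Rmult_le_pos; auto].
  destruct (vertex_rescaled_curve d d_metric kappa k l (G k) (G l) (G (k + l)) L0 d0 (F v) g v
              kappa_ge1 L0_ge1 (Rlt_le _ _ d0_small) Hsd0 (G_approx k) (G_approx l) (G_approx (k + l)%nat)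
              (HF v) Hg Hv Hmv) as [cv [Hcv Hrel]].
  apply Rle_trans with (a v * Lrho (G l) b cv); [specialize (Hadmb cv Hcv); pose proof (Ha v Hv); nra|].
  unfold Lrho. rewrite <- rsum_scal. apply rsum_le; intros u Hu.
  destruct excluded_middle_informative as [Hmu|]; [|rewrite Rmult_0_r; apply rwhen_nonneg, Rmult_le_pos; auto].
  rewrite rwhen_true; [lra|]. destruct (Hrel u Hu Hmu) as [w Hw]. exists w. unfold fine_rel. tauto.
Qed.

Lemma fine_scale_bound p k l F P Mkl x y :
  1 <= p -> packing_bound d fine_sep P -> 4 * kappa * (/ 2) ^ k < d0 ->
  (forall v, rescales_ball d L0 (a_c (G k) v) (4 * kappa * (/ 2) ^ k) (F v)) ->
  IsMod p (F0 d d0) (G (k + l)) Mkl ->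
  ModValues p (F0 d d0) (G k) x -> ModValues p (F0 d d0) (G l) y ->
  Mkl <= rpow (INR P * INR P + 1) p * INR P * x * y.
Proof.
  intros Hp HP Hsd0 HF HMkl [a [Ha [Hadma ->]]] [b [Hb [Hadmb ->]]].
  pose proof (pos_INR P).
  rewrite Rmult_assoc. unfold Mp.
  apply (IsMod_le_pair_weight p (F0 d d0) (G (k + l)) Mkl _ _ a b (fine_rel k l F)); auto.
  - nra.
  - intros g Hg. apply fine_rel_admissible; auto.
  - intros w Hw. pose proof (fine_rel_row_count k l F P w HP). lra.
  - intros v u Hv Hu. apply fine_rel_col_count; auto.
Qed.

Lemma fine_submultiplicative D :
  CompactSpace d -> 0 < D -> (forall z r, 0 < r <= D -> exists f, rescales_ball d L0 z r f) ->
  forall b, 1 <= b -> exists C, 0 <= C /\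
    forall p k l Mk Ml Mkl, 1 <= p <= b -> 4 * kappa * (/ 2) ^ k < D -> 4 * kappa * (/ 2) ^ k < d0 ->
      IsMod p (F0 d d0) (G k) Mk -> IsMod p (F0 d d0) (G l) Ml -> IsMod p (F0 d d0) (G (k + l)) Mkl ->
      Mkl <= C * Mk * Ml.
Proof.
  intros Hc HD SS b Hb.
  destruct (exists_packing_bound d d_metric Hc D L0 HD L0_ge1 SS fine_sep fine_sep_pos) as [P HP].
  pose proof (pos_INR P). assert (HM : 1 <= INR P * INR P + 1) by nra.
  exists (rpow (INR P * INR P + 1) b * INR P). split; [apply Rmult_le_pos; [apply rpow_nonneg|auto]|].
  intros p k l Mk Ml Mkl Hp HsD Hsd0 HMk HMl HMkl.
  pose proof (half_pow_pos k).
  destruct (choice (fun v f => rescales_ball d L0 (a_c (G k) v) (4 * kappa * (/ 2) ^ k) f)) as [F HF];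
    [intro v; apply SS; split; [nra|lra]|].
  apply (IsMod_le_mul p (F0 d d0) (G k) (G l)); auto; [apply Rmult_le_pos; [apply rpow_nonneg|auto]|].
  intros x y Hx Hy. pose proof (ModValues_nonneg _ _ _ _ Hx). pose proof (ModValues_nonneg _ _ _ _ Hy).
  eapply Rle_trans; [apply (fine_scale_bound p k l F P); eauto; lra|].
  rewrite !Rmult_assoc. apply Rmult_le_compat_r; [apply Rmult_le_pos; [auto|nra]|].
  apply rpow_le_exponent; lra.
Qed.

(* On coarse scales the scale-[k] density is replaced by the constant [1] on a single vertex. *)
Definition coarse_rel k l (w v u : nat) : Prop :=
  d (a_c (G (k + l)) w) (a_c (G l) u) < 2 * kappa * (/ 2) ^ l.

Definition coarse_sep K0 : R := (/ 2) ^ K0 / (2 * kappa * kappa).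

Lemma coarse_sep_pos K0 : 0 < coarse_sep K0.
Proof. unfold coarse_sep. pose proof (half_pow_pos K0). apply Rdiv_lt_0_compat; nra. Qed.

Lemma coarse_rel_row_count K0 k l P w :
  packing_bound d (coarse_sep K0) P ->
  rsum 1 (fun v => rcount (a_N (G l)) (coarse_rel k l w v)) <= INR P.
Proof.
  intros HP. simpl. rewrite Rplus_0_l. pose proof (half_pow_pos l).
  assert (HPr : packing_bound d (/ (2 * kappa * kappa)) P).
  { apply (packing_bound_weaken d (coarse_sep K0)); auto.
    unfold coarse_sep, Rdiv. rewrite Rmult_comm. pose proof (half_pow_le_1 K0).
    assert (0 < / (2 * kappa * kappa)) by (apply Rinv_0_lt_compat; nra). nra. }
  apply (HPr _ _ (a_c (G l)) (a_c (G (k + l)) w) (2 * kappa * (/ 2) ^ l)); [nra|auto|].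
  intros i j Hi Hj _ _ Hne.
  replace (/ (2 * kappa * kappa) * (2 * kappa * (/ 2) ^ l)) with (/ kappa * (/ 2) ^ l) by (field; lra).
  apply (approx_centers_separated d d_metric kappa l); auto.
Qed.

Lemma coarse_rel_col_count K0 k l P v u :
  (k <= K0)%nat -> packing_bound d (coarse_sep K0) P ->
  rcount (a_N (G (k + l))) (fun w => coarse_rel k l w v u) <= INR P.
Proof.
  intros HkK HP. pose proof (half_pow_pos l). pose proof (half_pow_antitone k K0 HkK).
  apply (HP _ _ (a_c (G (k + l))) (a_c (G l) u) (2 * kappa * (/ 2) ^ l)); [nra| |].
  - intros w Hw Hrel. rewrite metric_sym; auto.
  - intros i j Hi Hj _ _ Hne.
    pose proof (approx_centers_separated d d_metric kappa (k + l) (G (k + l)) i j (G_approx _) Hi Hj Hne) as Hsep.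
    rewrite pow_add in Hsep. eapply Rle_trans; [|exact Hsep].
    replace (coarse_sep K0 * (2 * kappa * (/ 2) ^ l)) with (/ kappa * ((/ 2) ^ K0 * (/ 2) ^ l))
      by (unfold coarse_sep; field; lra).
    apply Rmult_le_compat_l; [apply Rlt_le, Rinv_0_lt_compat; lra|nra].
Qed.

Lemma coarse_rel_admissible k l (b : nat -> R) g :
  (forall u, (u < a_N (G l))%nat -> 0 <= b u) -> (forall g, F0 d d0 g -> 1 <= Lrho (G l) b g) ->
  F0 d d0 g ->
  1 <= rsum 1 (fun v => rsum (a_N (G l)) (fun u =>
         rwhen (exists w, (w < a_N (G (k + l)))%nat /\ curve_meets g (a_V (G (k + l)) w) /\
                          coarse_rel k l w v u) (1 * b u))).
Proof.
  intros Hb Hadmb Hg. simpl. rewrite Rplus_0_l.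
  eapply Rle_trans; [apply (Hadmb g Hg)|]. apply rsum_le; intros u Hu. rewrite Rmult_1_l.
  destruct excluded_middle_informative as [[T [HT Hmeet]]|]; [|apply rwhen_nonneg; auto].
  destruct (proj1 (G_approx (k + l)%nat) (g T)) as [w [Hw Hwy]].
  rewrite rwhen_true; [lra|]. exists w. split; [auto|split; [exists T; auto|]].
  pose proof (approx_vertex_near_center d kappa _ _ _ _ (G_approx (k + l)%nat) Hw Hwy) as Hnear_w.
  pose proof (approx_vertex_near_center d kappa _ _ _ _ (G_approx l) Hu Hmeet) as Hnear_u.
  rewrite pow_add in Hnear_w. pose proof (half_pow_le_1 k). pose proof (half_pow_pos k). pose proof (half_pow_pos l).
  assert (kappa * ((/ 2) ^ k * (/ 2) ^ l) <= kappa * (/ 2) ^ l) by (apply Rmult_le_compat_l; nra).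
  pose proof (metric_triangle d d_metric (a_c (G (k + l)) w) (g T) (a_c (G l) u)) as Htri.
  rewrite (metric_sym d d_metric (g T)) in Htri. unfold coarse_rel. lra.
Qed.

Lemma coarse_scale_bound p K0 k l P Mkl y :
  1 <= p -> (k <= K0)%nat -> packing_bound d (coarse_sep K0) P ->
  IsMod p (F0 d d0) (G (k + l)) Mkl -> ModValues p (F0 d d0) (G l) y ->
  Mkl <= rpow (INR P + 1) p * INR P * y.
Proof.
  intros Hp HkK HP HMkl [b [Hb [Hadmb ->]]]. pose proof (pos_INR P).
  replace (rpow (INR P + 1) p * INR P * Mp (G l) p b)
    with (rpow (INR P + 1) p * INR P * (rsum 1 (fun _ => rpow 1 p) * Mp (G l) p b))
    by (simpl; rewrite rpow_1; ring).
  apply (IsMod_le_pair_weight p (F0 d d0) (G (k + l)) Mkl _ _ (fun _ => 1) b (coarse_rel k l)); auto; try (intros; lra).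
  - intros g Hg. apply coarse_rel_admissible; auto.
  - intros w Hw. pose proof (coarse_rel_row_count K0 k l P w HP). lra.
  - intros v u Hv Hu. apply (coarse_rel_col_count K0); auto.
Qed.

Lemma coarse_submultiplicative D K0 :
  CompactSpace d -> 0 < D -> (forall z r, 0 < r <= D -> exists f, rescales_ball d L0 z r f) ->
  (exists g, F0 d d0 g) ->
  forall b, 1 <= b -> exists C, 0 <= C /\
    forall p k l Mk Ml Mkl, 1 <= p <= b -> (k < K0)%nat ->
      IsMod p (F0 d d0) (G k) Mk -> IsMod p (F0 d d0) (G l) Ml -> IsMod p (F0 d d0) (G (k + l)) Mkl ->
      Mkl <= C * Mk * Ml.
Proof.
  intros Hc HD SS [g0 Hg0] b Hb.
  destruct (exists_packing_bound d d_metric Hc D L0 HD L0_ge1 SS (coarse_sep K0) (coarse_sep_pos K0)) as [P HP].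
  assert (HN : forall k, (0 < a_N (G k))%nat).
  { intro k. destruct (proj1 (G_approx k) (g0 0)) as [i [Hi _]]. lia. }
  destruct (exists_pos_lower_bound K0 (fun k => rpow (/ INR (a_N (G k))) b)) as [m0 [Hm0 Hlow]].
  { intros k _. apply rpow_pos, Rinv_0_lt_compat, lt_0_INR; auto. }
  set (Cs := rpow (INR P + 1) b * INR P). pose proof (pos_INR P).
  assert (HCs : 0 <= Cs) by (apply Rmult_le_pos; [apply rpow_nonneg|auto]).
  exists (Cs / m0). split; [apply Rmult_le_pos; [auto|apply Rlt_le, Rinv_0_lt_compat; auto]|].
  intros p k l Mk Ml Mkl Hp Hk HMk HMl HMkl.
  assert (HMk0 : m0 <= Mk).
  { apply (Rle_trans _ _ _ (Hlow k Hk)). eapply Rle_trans; [|apply (IsMod_ge_inv_card p (F0 d d0) (G k)); eauto; lra].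
    pose proof (lt_0_INR _ (HN k)). assert (1 <= INR (a_N (G k))) by (apply (le_INR 1), HN).
    apply rpow_ge_exponent; [split; [apply Rlt_le, Rinv_0_lt_compat; lra|]|lra].
    rewrite <- Rinv_1. apply Rinv_le_contravar; lra. }
  assert (HMl0 := IsMod_nonneg _ _ _ _ HMl).
  assert (Hsmall : Mkl <= Cs * Ml).
  { apply (glb_le_scaled _ _ _ _ HMl HCs). intros y Hy. pose proof (ModValues_nonneg _ _ _ _ Hy).
    eapply Rle_trans; [apply (coarse_scale_bound p K0 k l P Mkl y); auto; (lra || lia)|].
    apply Rmult_le_compat_r; [auto|]. apply Rmult_le_compat_r; [auto|]. apply rpow_le_exponent; lra. }
  replace (Cs / m0 * Mk * Ml) with (Cs * Ml * (Mk / m0)) by (field; lra).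
  assert (1 <= Mk / m0) by (apply Rmult_le_reg_r with m0; [auto|]; field_simplify; lra).
  pose proof (Rmult_le_pos _ _ HCs HMl0). nra.
Qed.

Lemma mod_submultiplicative D :
  CompactSpace d -> IsDiamZ d D -> (forall z r, 0 < r <= D -> exists f, rescales_ball d L0 z r f) ->
  (exists g, F0 d d0 g) ->
  forall b, 1 <= b -> exists C, 0 < C /\
    forall p, 1 <= p <= b -> forall (k l : nat) (Mk Ml Mkl : R),
      IsMod p (F0 d d0) (G k) Mk -> IsMod p (F0 d d0) (G l) Ml -> IsMod p (F0 d d0) (G (k + l)) Mkl ->
      Mkl <= C * Mk * Ml.
Proof.
  intros Hc HD SS [g0 Hg0] b Hb.
  assert (Hd0D : d0 <= D) by (apply (F0_diameter_ge d D d0 g0); auto).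
  assert (Hmin : 0 < Rmin D d0 / (4 * kappa)) by (apply Rdiv_lt_0_compat; [apply Rmin_pos|]; lra).
  destruct (half_pow_eventually_lt _ Hmin) as [K0 HK0].
  destruct (fine_submultiplicative D Hc ltac:(lra) SS b Hb) as [C1 [HC1 Hfine]].
  destruct (coarse_submultiplicative D K0 Hc ltac:(lra) SS (ex_intro _ g0 Hg0) b Hb) as [C2 [HC2 Hcoarse]].
  exists (C1 + C2 + 1). split; [lra|].
  intros p Hp k l Mk Ml Mkl HMk HMl HMkl.
  pose proof (Rmult_le_pos _ _ (IsMod_nonneg _ _ _ _ HMk) (IsMod_nonneg _ _ _ _ HMl)).
  destruct (Compare_dec.le_lt_dec K0 k) as [Hk|Hk].
  - assert (Hs : 4 * kappa * (/ 2) ^ k < Rmin D d0).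
    { specialize (HK0 k Hk). apply Rmult_lt_compat_l with (r := 4 * kappa) in HK0; [|lra].
      replace (4 * kappa * (Rmin D d0 / (4 * kappa))) with (Rmin D d0) in HK0 by (field; lra).
      exact HK0. }
    pose proof (Rmin_l D d0). pose proof (Rmin_r D d0).
    assert (Mkl <= C1 * Mk * Ml) by (apply (Hfine p k l); auto; lra). nra.
  - assert (Mkl <= C2 * Mk * Ml) by (apply (Hcoarse p k l); auto). nra.
Qed.
End Submultiplicativity.

Theorem mainTheorem10 (Z : Type) (d : Z -> Z -> R) :
  IsMetric d -> CompactSpace d -> ArcConnected d -> ApproxSelfSimilar d ->
  exists delta, 0 < delta /\
  forall (kappa : R) (G : nat -> Approx Z),
    1 <= kappa -> IsKappaApprox d kappa G ->
    forall d0, 0 < d0 < delta ->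
      (forall p, 1 <= p -> exists C, 0 < C /\
         forall (k l : nat) (Mk Ml Mkl : R),
           IsMod p (F0 d d0) (G k) Mk -> IsMod p (F0 d d0) (G l) Ml ->
           IsMod p (F0 d d0) (G (k + l)%nat) Mkl ->
           Mkl <= C * Mk * Ml) /\
      (forall b, 1 <= b -> exists C, 0 < C /\
         forall p, 1 <= p <= b ->
         forall (k l : nat) (Mk Ml Mkl : R),
           IsMod p (F0 d d0) (G k) Mk -> IsMod p (F0 d d0) (G l) Ml ->
           IsMod p (F0 d d0) (G (k + l)%nat) Mkl ->
           Mkl <= C * Mk * Ml).
Proof.
  intros Hm Hc _ [L0 [HL0 SS]].
  exists (/ (4 * L0)). split; [apply Rinv_0_lt_compat; lra|].
  intros kappa G Hk HG d0 Hd0.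
  assert (Hunif : forall b, 1 <= b -> exists C, 0 < C /\
    forall p, 1 <= p <= b -> forall (k l : nat) (Mk Ml Mkl : R),
      IsMod p (F0 d d0) (G k) Mk -> IsMod p (F0 d d0) (G l) Ml -> IsMod p (F0 d d0) (G (k + l)%nat) Mkl ->
      Mkl <= C * Mk * Ml).
  { intros b Hb. destruct (classic (exists g, F0 d d0 g)) as [[g0 Hg0]|Hempty].
    - destruct (exists_diameter d Hm Hc (g0 0)) as [D HD].
      apply (mod_submultiplicative d Hm kappa L0 d0 G Hk HG HL0 ltac:(lra) ltac:(lra) D Hc HD); eauto.
      intros z r Hr. destruct (SS D z r HD Hr) as [U [f [_ [_ [_ Hf]]]]]. exists f; exact Hf.
    - exists 1. split; [lra|]. intros p Hp k l Mk Ml Mkl HMk HMl HMkl.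
      pose proof (IsMod_empty_family p _ _ _ (fun g Hg => Hempty (ex_intro _ g Hg)) HMkl).
      pose proof (Rmult_le_pos _ _ (IsMod_nonneg _ _ _ _ HMk) (IsMod_nonneg _ _ _ _ HMl)). nra. }
  split; [|exact Hunif].
  intros p Hp. destruct (Hunif p Hp) as [C [HC HCp]]. exists C. split; [auto|].
  intros k l. apply HCp. lra.
Qed.
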